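(* Let $\mathbb{K}=(G,M,I)$ be a formal context and let ${\downarrow}\operatorname{Ext}(\mathbb{K})$ be the lattice of all closure systems on $G$ contained in $\operatorname{Ext}(\mathbb{K})$, ordered by inclusion. Then ${\downarrow}\operatorname{Ext}(\mathbb{K})$ (i) is join-semidistributive, (ii) is lower semi-modular, (iii) is meet-distributive, (iv) is join-pseudocomplemented, (v) is ranked, and (vi) is atomistic.
   Context: A formal context is a triple $(G,M,I)$ with finite nonempty sets $G$, $M$ and $I\subseteq G\times M$; derivations $A'=\{m\mid\forall a\in A:(a,m)\in I\}$, $B'=\{g\mid\forall b\in B:(g,b)\in I\}$; $\operatorname{Ext}(\mathbb{K})=\{A\subseteq G\mid A''=A\}$. A closure system on $G$ is a family of subsets of $G$ containing $G$ and closed under intersections; in ${\downarrow}\operatorname{Ext}(\mathbb{K})$ meet is intersection and join is the generated closure system. For a lattice $(L,\le)$ with cover relation $\prec$: $L$ is lower semi-modular iff for all $x,y$: $x\prec x\vee y$ implies $x\wedge y\prec y$; join-semidistributive iff $x\vee y=x\vee z$ implies $x\vee y=x\vee(y\wedge z)$; meet-distributive iff it is join-semidistributive and lower semi-modular; join-pseudocomplemented iff for every $x$ the set $\{y\in L\mid y\vee x=\top\}$ has a least element; ranked iff there is $\rho:L\to\mathbb{N}$ with $x\prec y\Rightarrow\rho(x)+1=\rho(y)$; atomistic iff every element is a join of atoms. *)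

From mathcomp Require Import all_boot.
Set Implicit Arguments. Unset Strict Implicit. Unset Printing Implicit Defensive.

Section FCA.
Variables (G M : finType) (I : {set G * M}).

Definition intent (A : {set G}) : {set M} :=
  [set m | [forall g in A, (g, m) \in I]].
Definition extent (B : {set M}) : {set G} :=
  [set g | [forall m in B, (g, m) \in I]].

Definition Ext : {set {set G}} := [set A | extent (intent A) == A].

End FCA.

(* closure system on G: contains G and closed under (arbitrary, here finite)
   intersections of subfamilies; the empty subfamily gives G itself. *)
Definition closure_system (G : finType) (C : {set {set G}}) : bool :=
  [forall S : {set {set G}}, (S \subset C) ==> ((\bigcap_(A in S) A) \in C)].

Definition gen_cs (G : finType) (F : {set {set G}}) : {set {set G}} :=
  [set (\bigcap_(A in S) A) | S : {set {set G}} in powerset F].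

Definition downExt (G M : finType) (I : {set G * M}) : {set {set {set G}}} :=
  [set C | closure_system C && (C \subset Ext I)].

Definition cs_meet (G : finType) (C D : {set {set G}}) := C :&: D.
Definition cs_join (G : finType) (C D : {set {set G}}) := gen_cs (C :|: D).

Section LatticeNotions.
Variables (T : finType) (L : {set T}) (le : rel T) (join meet : T -> T -> T)
          (top bot : T).

Definition lt_ x y := le x y && (x != y).

Definition covers (x y : T) : Prop :=
  [/\ x \in L, y \in L, lt_ x y & forall z, z \in L -> ~ (lt_ x z /\ lt_ z y)].

Definition lower_semimodular : Prop :=
  forall x y, x \in L -> y \in L -> covers x (join x y) -> covers (meet x y) y.

Definition join_semidistributive : Prop :=
  forall x y z, x \in L -> y \in L -> z \in L ->
    join x y = join x z -> join x y = join x (meet y z).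

Definition meet_distributive : Prop :=
  join_semidistributive /\ lower_semimodular.

Definition join_pseudocomplemented : Prop :=
  forall x, x \in L ->
    exists2 y, (y \in L /\ join y x = top) &
      forall z, z \in L -> join z x = top -> le y z.

Definition ranked : Prop :=
  exists rho : T -> nat, forall x y, covers x y -> rho x + 1 = rho y.

Definition atom (a : T) : Prop := covers bot a.

Definition atomistic : Prop :=
  forall x, x \in L -> exists S : {set T},
    (forall a, a \in S -> atom a) /\ x = \big[join/bot]_(a in S) a.

End LatticeNotions.

From mathcomp Require Import all_boot zify.
Set Implicit Arguments. Unset Strict Implicit. Unset Printing Implicit Defensive.

(* Only the fact that Ext(K) is a closure system E matters, so we work in the
   lattice L of closure subsystems of an arbitrary closure system E on G.
   If x is properly contained in y in L and A is an inclusion-minimal member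
   of y outside x, then A |: x is again a closure system; hence y covers x
   exactly when y adds a single set to x, the cardinality is a rank function,
   and lower semimodularity is a counting argument.  A member of gen_cs F that
   is not in F is the intersection of the strictly larger members of F;
   downward induction along inclusion then yields join-semidistributivity, and
   shows that the closure system generated by the meet-irreducibles of E
   outside x is the least y whose join with x is E.  The atoms are the systems
   {G, A}, and x is the join of the atoms {G, A} with A in x. *)

Lemma superset_ind (T : finType) (P : {set T} -> Prop) :
  (forall A : {set T}, (forall B : {set T}, A \proper B -> P B) -> P A) ->
  forall A, P A.
Proof.
move=> IH A; have [n] := ubnP #|~: A|; elim: n A => // n IHn A ltAn.
apply: IH => B AB; apply: IHn; rewrite -ltnS (leq_trans _ ltAn) // ltnS.
by rewrite proper_card // properC.
Qed.

Section ClosureSystems.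
Variable G : finType.
Implicit Types (F C D W : {set {set G}}) (S : {set {set G}}) (A B : {set G}).

Lemma closure_systemP C :
  reflect (forall S, S \subset C -> \bigcap_(A in S) A \in C) (closure_system C).
Proof.
by apply: (iffP forallP) => CS S; [exact/implyP | apply/implyP; exact: CS].
Qed.

Lemma setT_closure_system C : closure_system C -> [set: G] \in C.
Proof. by move=> /closure_systemP/(_ set0 (sub0set C)); rewrite big_set0. Qed.

Definition hull F A := \bigcap_(B in F | A \subset B) B.
Definition upper_meet F A := \bigcap_(B in F | A \proper B) B.

Lemma sub_upper_meet F A : A \subset upper_meet F A.
Proof. by apply/bigcapsP => B /andP[_ /proper_sub]. Qed.

Lemma upper_meetS F1 F2 A : F1 \subset F2 -> upper_meet F2 A \subset upper_meet F1 A.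
Proof.
move=> F12; apply/bigcapsP => B /andP[BF1 AB].
by apply: bigcap_inf; rewrite (subsetP F12) ?AB.
Qed.

Lemma upper_meet_closed W F A : closure_system W ->
  (forall B, B \in F -> A \proper B -> B \in W) -> upper_meet F A \in W.
Proof.
move=> /closure_systemP csW FW.
rewrite /upper_meet -big_set /=; apply: csW.
by apply/subsetP => B; rewrite inE => /andP[]; exact: FW.
Qed.

Lemma mem_gen_cs F A :
  reflect (exists2 S : {set {set G}}, S \subset F & A = \bigcap_(B in S) B)
          (A \in gen_cs F).
Proof.
by apply: (iffP imsetP) => -[S SF ->]; exists S; rewrite // powersetE in SF *.
Qed.

Lemma mem_gen_csE F A : (A \in gen_cs F) = (hull F A \subset A).
Proof.
apply/mem_gen_cs/idP => [[S SF ->] | hullA].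
  apply/bigcapsP => B BS; apply: bigcap_inf.
  by rewrite (subsetP SF) // bigcap_inf.
exists [set B in F | A \subset B]; first by apply/subsetP => B; rewrite inE => /andP[].
apply/eqP; rewrite eqEsubset big_set; apply/andP; split; last exact: hullA.
by apply/bigcapsP => B /andP[].
Qed.

Lemma subset_gen_cs F : F \subset gen_cs F.
Proof.
by apply/subsetP => A AF; rewrite mem_gen_csE bigcap_inf // AF subxx.
Qed.

Lemma closure_system_gen_cs F : closure_system (gen_cs F).
Proof.
apply/closure_systemP => S Sgen; rewrite mem_gen_csE.
apply/bigcapsP => A AS; have := subsetP Sgen A AS; rewrite mem_gen_csE.
apply: subset_trans; apply/bigcapsP => B /andP[BF AB].
by apply: bigcap_inf; rewrite BF (subset_trans (bigcap_inf _ AS)).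
Qed.

Lemma setT_gen_cs F : [set: G] \in gen_cs F.
Proof. exact/setT_closure_system/closure_system_gen_cs. Qed.

Lemma gen_csS F1 F2 : F1 \subset F2 -> gen_cs F1 \subset gen_cs F2.
Proof.
move=> F12; apply/subsetP => A /mem_gen_cs[S SF1 ->].
by apply/mem_gen_cs; exists S; rewrite ?(subset_trans SF1).
Qed.

Lemma gen_cs_least F C : closure_system C -> F \subset C -> gen_cs F \subset C.
Proof.
move=> /closure_systemP csC FC; apply/subsetP => A /mem_gen_cs[S SF ->].
exact/csC/(subset_trans SF).
Qed.

Lemma gen_cs_id C : closure_system C -> gen_cs C = C.
Proof. by move=> csC; apply/eqP; rewrite eqEsubset gen_cs_least ?subset_gen_cs. Qed.

Lemma gen_csUr F U : gen_cs (F :|: gen_cs U) = gen_cs (F :|: U).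
Proof.
apply/eqP; rewrite eqEsubset; apply/andP.
split; last exact/gen_csS/setUS/subset_gen_cs.
apply: gen_cs_least; first exact: closure_system_gen_cs.
rewrite subUset (subset_trans _ (subset_gen_cs _)) ?subsetUl //=.
exact/gen_csS/subsetUr.
Qed.

Lemma gen_cs0 : gen_cs set0 = [set [set: G]].
Proof. by rewrite /gen_cs powerset0 imset_set1 big_set0. Qed.

Lemma gen_cs1 A : gen_cs [set A] = [set [set: G]; A].
Proof. by rewrite /gen_cs powerset1 imsetU1 imset_set1 big_set0 big_set1. Qed.

Lemma closure_systemI C D :
  closure_system C -> closure_system D -> closure_system (C :&: D).
Proof.
move=> /closure_systemP csC /closure_systemP csD.
by apply/closure_systemP => S; rewrite subsetI inE => /andP[/csC-> /csD->].
Qed.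

Lemma gen_cs_upper_meet F A : A \in gen_cs F -> A \notin F -> upper_meet F A = A.
Proof.
rewrite mem_gen_csE => hullA AnF; apply/eqP; rewrite eqEsubset sub_upper_meet andbT.
apply: subset_trans hullA; apply/bigcapsP => B /andP[BF AB]; apply: bigcap_inf.
by rewrite BF properEneq AB andbT; apply: contraNneq AnF => ->.
Qed.

Lemma gen_cs_subset_ind F W : closure_system W ->
  (forall A, A \in F ->
     (forall B, B \in gen_cs F -> A \proper B -> B \in W) -> A \in W) ->
  gen_cs F \subset W.
Proof.
move=> csW FW; apply/subsetP; elim/superset_ind => A IH Agen.
have [AF|AnF] := boolP (A \in F); first by apply: FW => // B Bgen AB; exact: IH.
rewrite -(gen_cs_upper_meet Agen AnF); apply: upper_meet_closed => // B BF AB.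
exact/IH/(subsetP (subset_gen_cs F)).
Qed.

Lemma gen_csU_semidistr F C D : gen_cs (F :|: C) = gen_cs (F :|: D) ->
  gen_cs (F :|: C) = gen_cs (F :|: (C :&: D)).
Proof.
move=> eqCD; apply/eqP; rewrite eqEsubset; apply/andP.
split; last exact/gen_csS/setUS/subsetIl.
apply: gen_cs_subset_ind; first exact: closure_system_gen_cs.
move=> A AFC IH; have in_gen B : B \in F :|: C :&: D -> B \in gen_cs (F :|: C :&: D).
  exact: (subsetP (subset_gen_cs _)).
have [AF|AnF] := boolP (A \in F); first by rewrite in_gen ?inE ?AF.
have AC : A \in C by move: AFC; rewrite inE (negbTE AnF).
have [AD|AnD] := boolP (A \in D); first by rewrite in_gen // !inE AC AD orbT.
have AnFD : A \notin F :|: D by rewrite inE negb_or AnF AnD.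
have Agen : A \in gen_cs (F :|: D) by rewrite -eqCD (subsetP (subset_gen_cs _)).
rewrite -(gen_cs_upper_meet Agen AnFD); apply: upper_meet_closed.
  exact: closure_system_gen_cs.
by move=> B BFD AB; apply: IH => //; rewrite eqCD (subsetP (subset_gen_cs _)).
Qed.

Lemma closure_system_setU1 C D A :
  closure_system C -> closure_system D -> C \subset D -> A \in D ->
  (forall B, B \in D -> B \proper A -> B \in C) -> closure_system (A |: C).
Proof.
move=> /closure_systemP csC /closure_systemP csD CD AD minA.
apply/closure_systemP => S SAC.
have [AS|AnS] := boolP (A \in S); last first.
  rewrite setU1r // csC //; apply/subsetP => B BS.
  by have /setU1P[eBA|//] := subsetP SAC B BS; rewrite -eBA BS in AnS.
have SD : S \subset D by rewrite (subset_trans SAC) // subUset sub1set AD.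
have [->|neA] := eqVneq (\bigcap_(B in S) B) A; first exact: setU11.
by rewrite setU1r // minA ?csD // properEneq neA bigcap_inf.
Qed.

End ClosureSystems.

Section FormalContext.
Variables (G M : finType) (I : {set G * M}).
Implicit Types (A B : {set G}) (X Y : {set M}).

Lemma intentS A B : A \subset B -> intent I B \subset intent I A.
Proof.
move=> AB; apply/subsetP => m; rewrite !inE => /forall_inP Bm.
by apply/forall_inP => g /(subsetP AB)/Bm.
Qed.

Lemma extentS X Y : X \subset Y -> extent I Y \subset extent I X.
Proof.
move=> XY; apply/subsetP => g; rewrite !inE => /forall_inP Yg.
by apply/forall_inP => m /(subsetP XY)/Yg.
Qed.

Lemma subset_extent_intent A : A \subset extent I (intent I A).
Proof.
apply/subsetP => g gA; rewrite inE; apply/forall_inP => m.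
by rewrite inE => /forall_inP; apply.
Qed.

Lemma closure_system_Ext : closure_system (Ext I).
Proof.
apply/closure_systemP => S SExt; rewrite inE eqEsubset subset_extent_intent andbT.
apply/bigcapsP => A AS; have := subsetP SExt A AS; rewrite inE => /eqP <-.
exact/extentS/intentS/bigcap_inf.
Qed.

End FormalContext.

Definition closure_subsystems (G : finType) (E : {set {set G}}) :=
  [set C | closure_system C && (C \subset E)].

Section ClosureSubsystems.
Variables (G : finType) (E : {set {set G}}).
Hypothesis csE : closure_system E.
Implicit Types (x y z : {set {set G}}) (A B : {set G}).

Local Notation L := (closure_subsystems E).
Local Notation le := (fun x y : {set {set G}} => x \subset y).

Lemma subsystemsP x : reflect (closure_system x /\ x \subset E) (x \in L).
Proof. by rewrite inE; apply: andP. Qed.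

Lemma cs_meet_subsystems x y : x \in L -> y \in L -> cs_meet x y \in L.
Proof.
move=> /subsystemsP[csx xE] /subsystemsP[csy _]; apply/subsystemsP.
by rewrite /cs_meet subIset ?xE // closure_systemI.
Qed.

Lemma subsystems_coversP x y :
  covers L le x y <-> [/\ x \in L, y \in L, x \subset y & #|y| = #|x| + 1].
Proof.
split=> [[xL yL /andP[/= xy nxy] noz] | [xL yL xy cardy]].
  have [A0 A0yx] : exists A, A \in y :\: x.
    have /properP[_ [A Ay Ax]] : x \proper y by rewrite properEneq nxy.
    by exists A; rewrite inE Ax.
  have [A /setDP[Ay Ax] minA] := arg_minnP (fun A => #|A|) A0yx.
  have [/subsystemsP[csx _] /subsystemsP[csy yE]] := (xL, yL).
  have Ax_y : A |: x \subset y by rewrite subUset sub1set Ay.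
  have AxL : A |: x \in L.
    apply/subsystemsP; split; last exact: subset_trans Ax_y yE.
    apply: closure_system_setU1 csx csy xy Ay _ => B By BA.
    apply: contraTT (proper_card BA) => Bx; rewrite -leqNgt; apply: minA.
    exact/setDP.
  have -> : y = A |: x.
    apply/eqP; rewrite eq_sym eqEsubset Ax_y /=; apply: contraT => nyAx.
    case: (noz _ AxL); split; rewrite /lt_ /= ?Ax_y ?subsetUr //.
      by apply: contraNneq Ax => ->; rewrite setU11.
    by apply: contraNneq nyAx => ->; exact: subxx.
  by split; rewrite ?subsetUr // cardsU1 Ax addnC.
split=> //; first by rewrite /lt_ /= xy; apply: contra_eqN cardy => /eqP->; lia.
move=> z _ [/andP[/= xz nxz] /andP[/= zy nzy]].
have /proper_card : x \proper z by rewrite properEneq nxz.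
have /proper_card : z \proper y by rewrite properEneq nzy.
lia.
Qed.

Lemma subsystems_join_semidistributive :
  join_semidistributive L (@cs_join G) (@cs_meet G).
Proof. by move=> x y z _ _ _; exact: gen_csU_semidistr. Qed.

Lemma subsystems_ranked : ranked L le.
Proof. by exists (fun x => #|x|) => x y /subsystems_coversP[]. Qed.

Lemma subsystems_lower_semimodular :
  lower_semimodular L le (@cs_join G) (@cs_meet G).
Proof.
move=> x y xL yL /subsystems_coversP[_ _ x_xy card_xy].
have y_xy : y \subset cs_join x y.
  exact/(subset_trans _ (subset_gen_cs _))/subsetUr.
have yx_xy : #|y :\: x| <= #|cs_join x y :\: x| by exact/subset_leq_card/setSD.
have yx_gt0 : 0 < #|y :\: x|.
  rewrite card_gt0 setD_eq0; apply: contra_eqN card_xy => yx.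
  have /subsystemsP[csx _] := xL.
  by rewrite /cs_join (setUidPl yx) gen_cs_id //; lia.
apply/subsystems_coversP; split; rewrite ?cs_meet_subsystems ?subsetIr //.
have := cardsID x y; have := cardsID x (cs_join x y).
by rewrite (setIidPr x_xy) /cs_meet [x :&: y]setIC; lia.
Qed.

Definition meet_irreducibles := [set A in E | ~~ (upper_meet E A \subset A)].

Lemma subsystems_join_pseudocomplemented :
  join_pseudocomplemented L le (@cs_join G) E.
Proof.
move=> x /subsystemsP[csx xE].
set y := gen_cs (meet_irreducibles :\: x).
have csy : closure_system y by exact: closure_system_gen_cs.
have yE : y \subset E.
  rewrite gen_cs_least // (subset_trans (subsetDl _ _)) //.
  by apply/subsetP => A /setIdP[].
exists y; first split.
- exact/subsystemsP.
- apply/eqP; rewrite eqEsubset gen_cs_least ?subUset ?yE //=.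
  rewrite -{1}(gen_cs_id csE); apply: gen_cs_subset_ind.
    exact: closure_system_gen_cs.
  move=> A AE IH; have in_yx B : B \in y :|: x -> B \in cs_join y x.
    exact: (subsetP (subset_gen_cs _)).
  have [AMi|AnMi] := boolP (A \in meet_irreducibles).
    have [Ax|Anx] := boolP (A \in x); first by rewrite in_yx // inE Ax orbT.
    by rewrite in_yx // inE (subsetP (subset_gen_cs _)) // inE Anx.
  have <- : upper_meet E A = A.
    apply/eqP; rewrite eqEsubset sub_upper_meet andbT.
    by move: AnMi; rewrite inE AE negbK.
  apply: upper_meet_closed; first exact: closure_system_gen_cs.
  by move=> B BE AB; apply: IH; rewrite // (gen_cs_id csE).
- move=> z /subsystemsP[csz zE] zxE; apply: gen_cs_least => //.
  apply/subsetP => A /setDP[/setIdP[AE nMiA] Anx]; apply: contraNT nMiA => Anz.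
  have AnF : A \notin z :|: x by rewrite inE negb_or Anz.
  have Agen : A \in gen_cs (z :|: x) by rewrite -/(cs_join z x) zxE.
  by rewrite -{2}(gen_cs_upper_meet Agen AnF) upper_meetS // subUset zE.
Qed.

Lemma subsystems_atom A : A \in E -> A != [set: G] ->
  atom L le [set [set: G]] [set [set: G]; A].
Proof.
move=> AE AnT; apply/subsystems_coversP; split.
- apply/subsystemsP; rewrite -gen_cs0 closure_system_gen_cs gen_cs_least //.
  exact: sub0set.
- apply/subsystemsP; rewrite -gen_cs1 closure_system_gen_cs gen_cs_least //.
  by rewrite sub1set.
- by rewrite sub1set !inE eqxx.
- by rewrite cards2 cards1 eq_sym AnT.
Qed.

Lemma big_cs_join (S : {set {set {set G}}}) :
  \big[@cs_join G/[set [set: G]]]_(x in S) x = gen_cs (\bigcup_(x in S) x).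
Proof.
rewrite -gen_cs0; apply: (big_rec2 (fun x U => x = gen_cs U)) => // x _ U _ ->.
by rewrite /cs_join gen_csUr.
Qed.

Lemma subsystems_atomistic : atomistic L le (@cs_join G) [set [set: G]].
Proof.
move=> x /subsystemsP[csx xE].
exists [set [set [set: G]; A] | A in x :\ [set: G]]; split.
  move=> _ /imsetP[A /setD1P[AnT Ax] ->].
  by apply: subsystems_atom; rewrite ?(subsetP xE).
rewrite big_cs_join; apply/eqP; rewrite eqEsubset; apply/andP; split.
  apply/subsetP => A Ax; have [->|AnT] := eqVneq A [set: G]; first exact: setT_gen_cs.
  apply: (subsetP (subset_gen_cs _)); apply/bigcupP; exists [set [set: G]; A].
    by apply: imset_f; rewrite !inE AnT.
  by rewrite !inE eqxx orbT.
rewrite gen_cs_least //; apply/bigcupsP => _ /imsetP[A /setD1P[_ Ax] ->].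
by rewrite subUset !sub1set Ax setT_closure_system.
Qed.

End ClosureSubsystems.

Theorem proposition7 (G M : finType) (I : {set G * M})
  (hG : 0 < #|G|) (hM : 0 < #|M|) :
  let L := downExt I in
  let le := fun C D : {set {set G}} => C \subset D in
  let top := Ext I in
  let bot := [set [set: G]] in
  join_semidistributive L (@cs_join G) (@cs_meet G) /\
  lower_semimodular L le (@cs_join G) (@cs_meet G) /\
  meet_distributive L le (@cs_join G) (@cs_meet G) /\
  join_pseudocomplemented L le (@cs_join G) top /\
  ranked L le /\
  atomistic L le (@cs_join G) bot.
Proof.
move=> L le top bot; have csE := closure_system_Ext I.
split; first exact: subsystems_join_semidistributive.
split; first exact: subsystems_lower_semimodular.
split; first split.
- exact: subsystems_join_semidistributive.
- exact: subsystems_lower_semimodular.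
split; first exact: subsystems_join_pseudocomplemented.
split; first exact: subsystems_ranked.
exact: subsystems_atomistic.
Qed.
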